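(* Assume the standing setting and that $\|R\|\rho^a<1$. Let $\vartheta:=-\lambda/|\lambda|$ and $\delta\in\,]0,\arccos(\|R\|\rho^a)[$. Then: (i) for every $p_0=(z_0,w_0)\in\tilde{\mathcal U}$, the searchlight beam $S(z_0,\vartheta,\delta)$ is a stability beam for $p_0$; (ii) for every integral curve of $\mathcal E^*X_R$ of the form $t\mapsto(z_0+t\theta,w(t))$ with $t\ge0$, $\theta\in\mathbb S^1$, $w(0)=w_0$, staying in $\tilde{\mathcal U}$, the following estimates hold. If $\operatorname{Re}\theta\neq0$, $$\Big|w(t)-w_0-t\frac\theta\lambda\Big|\le\frac{e^{a\operatorname{Re}z_0}}{|\lambda\operatorname{Re}\theta|\,a}\,\|R\|\,\big|1-e^{at\operatorname{Re}\theta}\big|,$$ and if $\operatorname{Re}\theta=0$, $$\Big|w(t)-w_0-t\frac\theta\lambda\Big|\le\frac{e^{a\operatorname{Re}z_0}}{|\lambda|}\,t\,\|R\|.$$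
   Context: Standing setting: $\lambda\in\mathbb C\setminus\{0\}$, $a$ is a positive integer, $R\in x^a\mathbb C\{x,y\}$, and $X_R=\lambda x\partial_x+(1+R)y\partial_y$. The polydisc $\mathcal U=\rho\mathbb D\times r\mathbb D$ is one on which $R$ is holomorphic and bounded with $\sup_{\mathcal U}|R|<1$, and $\|R\|:=\sup_{\mathcal U}|R/x^a|$. Write $\mathcal E(z,w)=(e^z,e^w)$ and $\tilde{\mathcal U}=\{\operatorname{Re}z<\ln\rho,\ \operatorname{Re}w<\ln r\}$. The field $\mathcal E^*X_R=\lambda\partial_z+(1+R\circ\mathcal E)\partial_w$ defines the foliation $\tilde{\mathcal F}$; $\tilde{\mathcal L}_p$ is its leaf through $p$, and $\Pi(z,w)=z$. For $v$ with $\operatorname{Re}v<\ln\rho$, $0<\delta<\pi$ and $\vartheta\in\mathbb S^1$, the searchlight beam is $S(v,\vartheta,\delta):=\{z:\operatorname{Re}z<\ln\rho,\ |\arg(z-v)-\arg\vartheta|<\delta\}$. When $v=\Pi(p_0)$, it is called a stability beam (for $p_0$) if the following holds: for every $\theta\in\mathbb S^1$ with $|\arg(\theta/\vartheta)|<\delta$, the lift in $\tilde{\mathcal L}_{p_0}$, starting at $p_0$, of the ray $t\ge0\mapsto v+t\theta$ has a $w$-coordinate whose real part is decreasing in $t$. In particular the ray lifts entirely in $\tilde{\mathcal L}_{p_0}$ as long as it stays in $\{\operatorname{Re}z<\ln\rho\}$. *)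

From Stdlib Require Import Reals Ratan.
Open Scope R_scope.

Record Cx := mkC { Cre : R; Cim : R }.

Definition C0 : Cx := mkC 0 0.
Definition C1 : Cx := mkC 1 0.
Definition RtoC (x : R) : Cx := mkC x 0.
Definition Cadd (u v : Cx) : Cx := mkC (Cre u + Cre v) (Cim u + Cim v).
Definition Copp (u : Cx) : Cx := mkC (- Cre u) (- Cim u).
Definition Csub (u v : Cx) : Cx := Cadd u (Copp v).
Definition Cmul (u v : Cx) : Cx :=
  mkC (Cre u * Cre v - Cim u * Cim v) (Cre u * Cim v + Cim u * Cre v).
Definition Cscale (k : R) (u : Cx) : Cx := mkC (k * Cre u) (k * Cim u).
Definition Cnorm (u : Cx) : R := sqrt (Cre u ^ 2 + Cim u ^ 2).
Definition Cinv (u : Cx) : Cx :=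
  mkC (Cre u / (Cre u ^ 2 + Cim u ^ 2)) (- Cim u / (Cre u ^ 2 + Cim u ^ 2)).
Definition Cdiv (u v : Cx) : Cx := Cmul u (Cinv v).
Fixpoint Cpow (u : Cx) (n : nat) : Cx :=
  match n with O => C1 | S m => Cmul u (Cpow u m) end.
Definition Cexp (z : Cx) : Cx := mkC (exp (Cre z) * cos (Cim z)) (exp (Cre z) * sin (Cim z)).

(* |arg u| < d  (principal argument), for 0 < d < PI *)
Definition arg_lt (u : Cx) (d : R) : Prop :=
  u <> C0 /\ exists phi, - d < phi < d /\ u = Cscale (Cnorm u) (mkC (cos phi) (sin phi)).

Definition Cdiff_at (f : Cx -> Cx) (z : Cx) : Prop :=
  exists L : Cx, forall eps, 0 < eps -> exists d, 0 < d /\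
    forall h, 0 < Cnorm h < d ->
      Cnorm (Csub (Csub (f (Cadd z h)) (f z)) (Cmul L h)) <= eps * Cnorm h.

Definition inU (rho r : R) (x y : Cx) : Prop := Cnorm x < rho /\ Cnorm y < r.

(* holomorphic on U (Osgood): jointly continuous and holomorphic in each variable *)
Definition holo_on_U (rho r : R) (F : Cx -> Cx -> Cx) : Prop :=
  forall x y, inU rho r x y ->
    Cdiff_at (fun u => F u y) x /\ Cdiff_at (fun v => F x v) y /\
    (forall eps, 0 < eps -> exists d, 0 < d /\ forall x' y',
        Cnorm (Csub x' x) < d -> Cnorm (Csub y' y) < d ->
        Cnorm (Csub (F x' y') (F x y)) < eps).

(* R in x^a Cx{x,y}, realised on the polydisc: R = x^a G with G holomorphic on U *)
Definition divisible_by_xa (rho r : R) (a : nat) (F : Cx -> Cx -> Cx) : Prop :=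
  exists G : Cx -> Cx -> Cx, holo_on_U rho r G /\
    forall x y, inU rho r x y -> F x y = Cmul (Cpow x a) (G x y).

Definition is_normR (rho r : R) (a : nat) (F : Cx -> Cx -> Cx) (N : R) : Prop :=
  is_lub (fun s => exists x y, inU rho r x y /\ x <> C0 /\
                      s = Cnorm (Cdiv (F x y) (Cpow x a))) N.

Definition inUt (rho r : R) (z w : Cx) : Prop := Cre z < ln rho /\ Cre w < ln r.

Definition Cderiv (w : R -> Cx) (t : R) (L : Cx) : Prop :=
  derivable_pt_lim (fun s => Cre (w s)) t (Cre L) /\
  derivable_pt_lim (fun s => Cim (w s)) t (Cim L).

(* t in [0,T] |-> (z0 + t theta, w t) is a curve in the leaf of the foliation
   defined by E^* X_R = lam d/dz + (1 + R o E) d/dw, starting at (z0, w0),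
   staying in tilde U: w is continuous on [0,T], w 0 = w0, and on (0,T)
   w'(t) = (theta/lam) (1 + R(e^{z0 + t theta}, e^{w(t)})). *)
Definition lift_on (lam : Cx) (F : Cx -> Cx -> Cx) (rho r : R)
    (z0 w0 theta : Cx) (w : R -> Cx) (T : R) : Prop :=
  0 <= T /\ w 0 = w0 /\
  (forall t, 0 <= t <= T -> inUt rho r (Cadd z0 (Cscale t theta)) (w t)) /\
  (forall t, 0 <= t <= T -> forall eps, 0 < eps -> exists d, 0 < d /\
     forall s, 0 <= s <= T -> Rabs (s - t) < d -> Cnorm (Csub (w s) (w t)) < eps) /\
  (forall t, 0 < t < T ->
     Cderiv w t (Cmul (Cdiv theta lam)
                   (Cadd C1 (F (Cexp (Cadd z0 (Cscale t theta))) (Cexp (w t)))))).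

Definition searchlight_beam (rho : R) (v vt : Cx) (delta : R) (z : Cx) : Prop :=
  Cre z < ln rho /\ arg_lt (Cdiv (Csub z v) vt) delta.

(* S(v, vt, delta) is a stability beam for p0 = (z0, w0), with v = Pi(p0) = z0:
   for every unit theta with |arg(theta/vt)| < delta, the lift of the ray
   t >= 0 |-> v + t theta starting at p0 exists as long as the ray stays in
   {Re z < ln rho}, and (every) such lift has strictly decreasing Re w. *)
Definition is_stability_beam (lam : Cx) (F : Cx -> Cx -> Cx) (rho r : R)
    (p0 : Cx * Cx) (v vt : Cx) (delta : R) : Prop :=
  v = fst p0 /\
  forall theta, Cnorm theta = 1 -> arg_lt (Cdiv theta vt) delta ->
    (exists w : R -> Cx, forall T, 0 <= T ->
        Cre (Cadd v (Cscale T theta)) < ln rho ->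
        lift_on lam F rho r v (snd p0) theta w T) /\
    (forall (w : R -> Cx) T, lift_on lam F rho r v (snd p0) theta w T ->
        forall s t, 0 <= s < t -> t <= T -> Cre (w t) < Cre (w s)).

From Pilot Require Import Defs.
From Stdlib Require Import Reals Ratan.
Open Scope R_scope.
From Stdlib Require Import Lra Lia.
From Coquelicot Require Coquelicot.
From HB Require Import structures.
From mathcomp Require all_ssreflect_compat all_algebra.
From mathcomp Require mathcomp_extra boolp classical_sets functions set_interval reals topology normedtype.
From mathcomp Require Rstruct Rstruct_topology.
Set Bullet Behavior "Strict Subproofs".

(* In the logarithmic coordinates [(z, w)], along the ray [z = z0 + t theta] a
   leaf of [E^* X_R] is the graph of a solution of the non-autonomous equation
   [w' = (theta / lam) (1 + R(e^z, e^w))] (the [drift]).  As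
   [|R(e^z, e^w)| <= ||R|| e^(a Re z) <= ||R|| rho^a < 1], the real part of the
   drift is negative as soon as [|arg (theta / vt)| < delta < acos (||R|| rho^a)]
   ([beam_re_neg]); this is the geometric content of (i).  Existence of the
   lifts is Peano's theorem, proved with the Euler scheme: a cluster curve of
   the Euler paths (Tychonoff) solves the equation wherever the field is
   continuous, and the decrease of [Re w] keeps it in the lifted polydisc.
   Estimate (ii) is the mean value inequality for the deviation
   [w(t) - w0 - t theta / lam], whose derivative has modulus at most
   [||R|| e^(a Re z0) e^(a t Re theta) / |lam|]. *)

Lemma Cnorm_ge0 u : 0 <= Cnorm u.
Proof. apply sqrt_pos. Qed.

Lemma Cnorm_sq u : Cnorm u * Cnorm u = Cre u ^ 2 + Cim u ^ 2.
Proof. unfold Cnorm. apply sqrt_sqrt. nra. Qed.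

Lemma Cnorm_real x : Cnorm (mkC x 0) = Rabs x.
Proof.
  unfold Cnorm; cbn [Cre Cim]. rewrite <- sqrt_Rsqr_abs. f_equal. unfold Rsqr. ring.
Qed.

Lemma Cnorm_C0 : Cnorm C0 = 0.
Proof. unfold C0. rewrite Cnorm_real. apply Rabs_R0. Qed.

(* [Defs.C1] is the complex unit; a bare [C1] would denote a function of [Ratan]. *)
Lemma Cnorm_C1 : Cnorm Defs.C1 = 1.
Proof. unfold Defs.C1. rewrite Cnorm_real. apply Rabs_R1. Qed.

Lemma Rabs_le_sqrt x y : Rabs x <= sqrt (x ^ 2 + y ^ 2).
Proof. rewrite <- sqrt_Rsqr_abs. apply sqrt_le_1_alt. unfold Rsqr. nra. Qed.

Lemma Rabs_Cre_le u : Rabs (Cre u) <= Cnorm u.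
Proof. apply Rabs_le_sqrt. Qed.

Lemma Rabs_Cim_le u : Rabs (Cim u) <= Cnorm u.
Proof. unfold Cnorm. rewrite Rplus_comm. apply Rabs_le_sqrt. Qed.

Lemma Cnorm_le_l1 u : Cnorm u <= Rabs (Cre u) + Rabs (Cim u).
Proof.
  pose proof (Rabs_pos (Cre u)); pose proof (Rabs_pos (Cim u)).
  unfold Cnorm. rewrite <- (sqrt_Rsqr (Rabs (Cre u) + Rabs (Cim u))) by lra.
  apply sqrt_le_1_alt. unfold Rsqr.
  rewrite <- (pow2_abs (Cre u)), <- (pow2_abs (Cim u)). nra.
Qed.

Lemma cauchy_schwarz a b x y : a * x + b * y <= sqrt (a ^ 2 + b ^ 2) * sqrt (x ^ 2 + y ^ 2).
Proof.
  rewrite <- sqrt_mult by nra.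
  apply Rle_trans with (Rabs (a * x + b * y)); [apply Rle_abs|].
  rewrite <- sqrt_Rsqr_abs. apply sqrt_le_1_alt. unfold Rsqr.
  assert (0 <= (a * y - b * x) ^ 2) by apply pow2_ge_0.
  assert ((a^2+b^2)*(x^2+y^2) - (a*x+b*y)*(a*x+b*y) = (a*y-b*x)^2) by ring. lra.
Qed.

Lemma Cnorm_triang u v : Cnorm (Cadd u v) <= Cnorm u + Cnorm v.
Proof.
  pose proof (Cnorm_ge0 u). pose proof (Cnorm_ge0 v). pose proof (Cnorm_ge0 (Cadd u v)).
  apply Rsqr_incr_0_var; [|lra]. unfold Rsqr.
  rewrite Cnorm_sq. pose proof (Cnorm_sq u). pose proof (Cnorm_sq v).
  pose proof (cauchy_schwarz (Cre u) (Cim u) (Cre v) (Cim v)) as H5.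
  fold (Cnorm u) (Cnorm v) in H5. cbn [Cadd Cre Cim]. nra.
Qed.

Lemma Cnorm_mul u v : Cnorm (Cmul u v) = Cnorm u * Cnorm v.
Proof. unfold Cnorm, Cmul; cbn [Cre Cim]. rewrite <- sqrt_mult by nra. f_equal. ring. Qed.

Lemma Cnorm_scale k u : Cnorm (Cscale k u) = Rabs k * Cnorm u.
Proof.
  unfold Cnorm, Cscale; cbn [Cre Cim]. rewrite <- sqrt_Rsqr_abs, <- sqrt_mult.
  - f_equal. unfold Rsqr. ring.
  - apply Rle_0_sqr.
  - nra.
Qed.

Lemma Cnorm_exp z : Cnorm (Cexp z) = exp (Cre z).
Proof.
  unfold Cnorm, Cexp; cbn [Cre Cim].
  replace ((exp (Cre z) * cos (Cim z)) ^ 2 + (exp (Cre z) * sin (Cim z)) ^ 2)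
    with (Rsqr (exp (Cre z))) by (pose proof (sin2_cos2 (Cim z)); unfold Rsqr in *; nra).
  apply sqrt_Rsqr. left; apply exp_pos.
Qed.

Lemma Cnorm_pow x n : Cnorm (Cpow x n) = Cnorm x ^ n.
Proof.
  induction n as [|n IH]; cbn [Cpow pow].
  - apply Cnorm_C1.
  - rewrite Cnorm_mul, IH. reflexivity.
Qed.

Lemma Cnorm_eq0 u : Cnorm u = 0 -> u = C0.
Proof.
  intro H. pose proof (Cnorm_sq u) as H2. rewrite H in H2.
  destruct u as [p q]; simpl in *. unfold C0. f_equal; nra.
Qed.

Lemma Cnorm_pos u : u <> C0 -> 0 < Cnorm u.
Proof.
  intro H. destruct (Cnorm_ge0 u) as [h|h]; auto. exfalso; apply H, Cnorm_eq0; auto.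
Qed.

Lemma Cnorm_inv u : u <> C0 -> Cnorm (Cinv u) = / Cnorm u.
Proof.
  intro H. pose proof (Cnorm_pos u H) as Hp. pose proof (Cnorm_sq u) as Hs.
  destruct u as [p q]; unfold Cnorm, Cinv in *; cbn [Cre Cim] in *.
  set (n := sqrt (p ^ 2 + q ^ 2)) in *.
  replace ((p / (p ^ 2 + q ^ 2)) ^ 2 + (- q / (p ^ 2 + q ^ 2)) ^ 2) with (Rsqr (/ n)).
  - apply sqrt_Rsqr. left; apply Rinv_0_lt_compat; auto.
  - assert (Hn : n <> 0) by lra. unfold Rsqr. rewrite <- Hs.
    replace ((p / (n * n)) ^ 2 + (- q / (n * n)) ^ 2)
      with ((p ^ 2 + q ^ 2) / ((n * n) * (n * n))) by (field; auto).
    rewrite <- Hs. field. auto.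
Qed.

Lemma Cnorm_div u v : v <> C0 -> Cnorm (Cdiv u v) = Cnorm u / Cnorm v.
Proof. intro H. unfold Cdiv. rewrite Cnorm_mul, Cnorm_inv by auto. reflexivity. Qed.

(* The two real coordinates of a complex number, indexed by a boolean;
   curves in [Cx] are handled coordinatewise through [coord]. *)
Definition coord (b : bool) (u : Cx) : R := if b then Cre u else Cim u.

Lemma coord_add b u v : coord b (Cadd u v) = coord b u + coord b v.
Proof. destruct b; reflexivity. Qed.

Lemma coord_scale b k u : coord b (Cscale k u) = k * coord b u.
Proof. destruct b; reflexivity. Qed.

Lemma Rabs_coord_le b u : Rabs (coord b u) <= Cnorm u.
Proof. destruct b; [apply Rabs_Cre_le | apply Rabs_Cim_le]. Qed.

Lemma Cnorm_sub_le_coord u v e :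
  (forall b, Rabs (coord b u - coord b v) <= e) -> Cnorm (Csub u v) <= 2 * e.
Proof.
  intro H. eapply Rle_trans; [apply Cnorm_le_l1|].
  pose proof (H true); pose proof (H false); cbn [coord] in *.
  unfold Csub, Cadd, Copp; cbn [Cre Cim]. unfold Rminus in *. lra.
Qed.

Lemma exp_le x y : x <= y -> exp x <= exp y.
Proof. intros [H|H]; [left; apply exp_increasing; lra | subst; lra]. Qed.

Lemma exp_INR_mul n x : exp (INR n * x) = exp x ^ n.
Proof.
  induction n as [|n IH].
  - rewrite Rmult_0_l. apply exp_0.
  - rewrite S_INR. replace ((INR n + 1) * x) with (x + INR n * x) by ring.
    rewrite exp_plus, IH. reflexivity.
Qed.

Lemma Rabs_le_split x y : Rabs x <= y -> - y <= x <= y.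
Proof. intro H. pose proof (Rle_abs x). pose proof (Rle_abs (- x)). rewrite Rabs_Ropp in *. lra. Qed.

Lemma Rabs_triang3 a b c : Rabs (a - b + c) <= Rabs a + Rabs b + Rabs c.
Proof.
  eapply Rle_trans; [apply Rabs_triang|]. unfold Rminus.
  pose proof (Rabs_triang a (- b)). rewrite Rabs_Ropp in *. lra.
Qed.

Lemma le_of_le_plus_eps x y C : 0 <= C -> (forall e, 0 < e -> x <= y + C * e) -> x <= y.
Proof.
  intros HC H. destruct (Rle_dec x y) as [h|h]; auto. exfalso.
  set (e := (x - y) / (C + 1)).
  assert (He : 0 < e) by (unfold e; apply Rdiv_lt_0_compat; lra).
  specialize (H e He).
  assert (C * e < x - y).
  { unfold e. apply Rmult_lt_reg_r with (C + 1); [lra|].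
    replace (C * ((x - y) / (C + 1)) * (C + 1)) with (C * (x - y)) by (field; lra). nra. }
  lra.
Qed.

Lemma eq_of_dist_lt_eps x y : (forall e, 0 < e -> Rabs (x - y) < e) -> x = y.
Proof.
  intro H. destruct (Req_dec x y) as [h|h]; auto. exfalso.
  assert (Hd : 0 < Rabs (x - y)) by (apply Rabs_pos_lt; lra).
  specialize (H _ Hd). lra.
Qed.

Definition cont_within (a b : R) (h : R -> R) (x : R) : Prop :=
  forall eps, 0 < eps -> exists d, 0 < d /\
    forall y, a <= y <= b -> Rabs (y - x) < d -> Rabs (h y - h x) < eps.

Lemma cont_of_derivable f x l : derivable_pt_lim f x l ->
  forall eps, 0 < eps -> exists d, 0 < d /\ forall y, Rabs (y - x) < d -> Rabs (f y - f x) < eps.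
Proof.
  intros H eps Heps.
  pose proof (derivable_continuous_pt f x (exist _ l H)) as C.
  destruct (C eps Heps) as [d [Hd Hd']]. exists d. split; auto.
  intros y Hy. destruct (Req_dec y x) as [E|E].
  - subst. rewrite Rminus_diag, Rabs_R0. auto.
  - apply Hd'. split; [split; [exact I | auto] | exact Hy].
Qed.

(* Clamping to [[a, b]]: it lets the mean value theorem of the library, which
   wants continuity on all of [[a, b]] in the ambient sense, be applied to a
   function only known to be continuous relative to [[a, b]]. *)
Definition clamp (a b y : R) := Rmax a (Rmin b y).

Lemma clamp_in a b y : a <= b -> a <= clamp a b y <= b.
Proof. intro H; unfold clamp, Rmax, Rmin. destruct (Rle_dec b y); destruct (Rle_dec a _); lra. Qed.

Lemma clamp_id a b y : a <= y <= b -> clamp a b y = y.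
Proof. intro H; unfold clamp, Rmax, Rmin. destruct (Rle_dec b y); destruct (Rle_dec a _); lra. Qed.

Lemma clamp_lip a b x y : a <= x <= b -> Rabs (clamp a b y - x) <= Rabs (y - x).
Proof.
  intro H; unfold clamp, Rmax, Rmin.
  destruct (Rle_dec b y); destruct (Rle_dec a _); unfold Rabs; repeat destruct Rcase_abs; lra.
Qed.

Lemma mvt_within (h dh : R -> R) a b : a <= b ->
  (forall x, a < x < b -> derivable_pt_lim h x (dh x)) ->
  (forall x, a <= x <= b -> cont_within a b h x) ->
  exists c, a <= c <= b /\ h b - h a = dh c * (b - a).
Proof.
  intros Hab Hd Hc.
  destruct (Req_dec a b) as [E|Hne].
  { subst. exists b. split; [lra|ring]. }
  set (hc := fun x => h (clamp a b x)).
  destruct (Coquelicot.Derive.MVT_gen hc a b dh) as [c [Hc1 Hc2]];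
    rewrite ?Rmin_left, ?Rmax_right in * by lra.
  - intros x Hx. apply Coquelicot.Derive.is_derive_Reals.
    intros eps Heps. destruct (Hd x Hx eps Heps) as [del Hdel].
    assert (Hp : 0 < Rmin del (Rmin (x - a) (b - x))) by (repeat apply Rmin_pos; lra || apply cond_pos).
    exists (mkposreal _ Hp). intros h0 Hh0 Hh0'. simpl in Hh0'.
    pose proof (Rmin_l del (Rmin (x - a) (b - x))). pose proof (Rmin_r del (Rmin (x - a) (b - x))).
    pose proof (Rmin_l (x - a) (b - x)). pose proof (Rmin_r (x - a) (b - x)).
    unfold hc. rewrite !clamp_id.
    + apply Hdel; auto. lra.
    + lra.
    + unfold Rabs in Hh0'; destruct Rcase_abs in Hh0'; lra.
  - intros x Hx eps Heps.
    destruct (Hc x Hx eps Heps) as [d [Hd0 Hd1]]. exists d. split; auto.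
    intros y [_ Hy]. unfold R_dist in *; simpl in *; unfold R_dist in *.
    unfold hc. rewrite (clamp_id a b x) by lra.
    apply Hd1; [apply clamp_in; lra|].
    eapply Rle_lt_trans; [apply clamp_lip; lra | exact Hy].
  - exists c. split; auto. unfold hc in Hc2. rewrite !clamp_id in Hc2 by lra. exact Hc2.
Qed.

Lemma lipschitz_of_deriv_bound f f' : (forall x, derivable_pt_lim f x (f' x)) ->
  (forall x, Rabs (f' x) <= 1) -> forall x y, Rabs (f y - f x) <= Rabs (y - x).
Proof.
  intros Hd Hb.
  assert (W : forall x y, x <= y -> Rabs (f y - f x) <= Rabs (y - x)).
  { intros x y Hxy. destruct (mvt_within f f' x y Hxy) as [c [Hc E]].
    - intros; apply Hd.
    - intros z _ eps Heps. destruct (cont_of_derivable f z (f' z) (Hd z) eps Heps) as [d [Hd0 Hd1]].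
      exists d; split; auto.
    - rewrite E, Rabs_mult. rewrite <- (Rmult_1_l (Rabs (y - x))) at 2.
      apply Rmult_le_compat_r; [apply Rabs_pos | apply Hb]. }
  intros x y. destruct (Rle_dec x y); [apply W; lra|].
  rewrite Rabs_minus_sym, (Rabs_minus_sym y). apply W; lra.
Qed.

Lemma cos_lip x y : Rabs (cos y - cos x) <= Rabs (y - x).
Proof.
  apply (lipschitz_of_deriv_bound cos (fun x => - sin x)); [apply derivable_pt_lim_cos|].
  intro z. rewrite Rabs_Ropp. apply Rabs_le, SIN_bound.
Qed.

Lemma sin_lip x y : Rabs (sin y - sin x) <= Rabs (y - x).
Proof.
  apply (lipschitz_of_deriv_bound sin cos); [apply derivable_pt_lim_sin|].
  intro z. apply Rabs_le, COS_bound.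
Qed.

Lemma Cexp_continuous z0 : forall eps, 0 < eps -> exists d, 0 < d /\ forall z,
  Rabs (Cre z - Cre z0) < d -> Rabs (Cim z - Cim z0) < d -> Cnorm (Csub (Cexp z) (Cexp z0)) < eps.
Proof.
  intros eps Heps. set (E := exp (Cre z0)). assert (HE : 0 < E) by apply exp_pos.
  destruct (cont_of_derivable exp (Cre z0) E (derivable_pt_lim_exp _) (eps / 8)) as [d1 [Hd1 Hd1']];
    [lra|].
  assert (Hd2 : 0 < eps / (8 * E)) by (apply Rdiv_lt_0_compat; lra).
  exists (Rmin d1 (eps / (8 * E))). split; [apply Rmin_pos; auto|]. intros z H1 H2.
  pose proof (Rmin_l d1 (eps / (8 * E))). pose proof (Rmin_r d1 (eps / (8 * E))).
  assert (X1 : Rabs (exp (Cre z) - E) < eps / 8) by (apply Hd1'; lra).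
  assert (X2 : E * Rabs (Cim z - Cim z0) <= eps / 8).
  { apply Rle_trans with (E * (eps / (8 * E))); [apply Rmult_le_compat_l; lra|]. right; field; lra. }
  (* each coordinate of e^z - e^z0 splits as (e^x - e^x0) trig(y) + e^x0 (trig y - trig y0) *)
  assert (Split : forall (g : R -> R), (forall y, Rabs (g y) <= 1) ->
      (forall y, Rabs (g y - g (Cim z0)) <= Rabs (y - Cim z0)) ->
      Rabs (exp (Cre z) * g (Cim z) + - (E * g (Cim z0))) <= eps / 4).
  { intros g Hg Hlip.
    replace (exp (Cre z) * g (Cim z) + - (E * g (Cim z0)))
      with ((exp (Cre z) - E) * g (Cim z) + E * (g (Cim z) - g (Cim z0))) by ring.
    eapply Rle_trans; [apply Rabs_triang|]. rewrite !Rabs_mult, (Rabs_right E) by lra.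
    pose proof (Hg (Cim z)). pose proof (Hlip (Cim z)). pose proof (Rabs_pos (exp (Cre z) - E)).
    assert (E * Rabs (g (Cim z) - g (Cim z0)) <= E * Rabs (Cim z - Cim z0)) by (apply Rmult_le_compat_l; lra).
    nra. }
  eapply Rle_lt_trans; [apply Cnorm_le_l1|].
  unfold Cexp, Csub, Cadd, Copp; cbn [Cre Cim]. fold E.
  pose proof (Split cos (fun y => Rabs_le _ _ (COS_bound y)) (fun y => cos_lip (Cim z0) y)).
  pose proof (Split sin (fun y => Rabs_le _ _ (SIN_bound y)) (fun y => sin_lip (Cim z0) y)).
  lra.
Qed.

Lemma cont_within_plus a b f g x : cont_within a b f x -> cont_within a b g x ->
  cont_within a b (fun s => f s + g s) x.
Proof.
  intros Hf Hg eps Heps.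
  destruct (Hf (eps / 2)) as [d1 [Hd1 H1]]; [lra|]. destruct (Hg (eps / 2)) as [d2 [Hd2 H2]]; [lra|].
  exists (Rmin d1 d2). split; [apply Rmin_pos; auto|]. intros y Hy Hyx.
  pose proof (Rmin_l d1 d2). pose proof (Rmin_r d1 d2).
  specialize (H1 y Hy ltac:(lra)). specialize (H2 y Hy ltac:(lra)).
  replace (f y + g y - (f x + g x)) with ((f y - f x) + (g y - g x)) by ring.
  eapply Rle_lt_trans; [apply Rabs_triang | lra].
Qed.

Lemma cont_within_scal a b c f x : cont_within a b f x -> cont_within a b (fun s => c * f s) x.
Proof.
  intros Hf eps Heps. pose proof (Rabs_pos c) as Hc.
  destruct (Hf (eps / (Rabs c + 1))) as [d [Hd H]]; [apply Rdiv_lt_0_compat; lra|].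
  exists d. split; auto. intros y Hy Hyx. specialize (H y Hy Hyx).
  rewrite <- Rmult_minus_distr_l, Rabs_mult.
  apply Rle_lt_trans with (Rabs c * (eps / (Rabs c + 1))).
  - apply Rmult_le_compat_l; lra.
  - apply Rmult_lt_reg_r with (Rabs c + 1); [lra|].
    replace (Rabs c * (eps / (Rabs c + 1)) * (Rabs c + 1)) with (Rabs c * eps) by (field; lra). nra.
Qed.

Lemma cont_within_of_derivable a b f x l : derivable_pt_lim f x l -> cont_within a b f x.
Proof.
  intros H eps Heps. destruct (cont_of_derivable f x l H eps Heps) as [d [Hd Hd']].
  exists d; split; auto.
Qed.

Lemma cont_within_coord a b (D : R -> Cx) x c :
  (forall eps, 0 < eps -> exists d, 0 < d /\
     forall y, a <= y <= b -> Rabs (y - x) < d -> Cnorm (Csub (D y) (D x)) < eps) ->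
  cont_within a b (fun s => coord c (D s)) x.
Proof.
  intros H eps Heps. destruct (H eps Heps) as [d [Hd Hd']]. exists d; split; auto.
  intros y Hy Hyx. eapply Rle_lt_trans; [|apply (Hd' y Hy Hyx)].
  replace (coord c (D y) - coord c (D x)) with (coord c (Csub (D y) (D x)))
    by (destruct c; reflexivity).
  apply Rabs_coord_le.
Qed.

(* Proof: with [e := D t], the real
   function [s |-> <e, D s> - |e| B s] is nonincreasing by Cauchy-Schwarz. *)
Lemma mean_value_ineq (D Dd : R -> Cx) (B b : R -> R) t :
  0 <= t -> D 0 = C0 -> B 0 = 0 -> 0 <= B t ->
  (forall s, 0 < s < t -> Cderiv D s (Dd s)) ->
  (forall s, 0 <= s <= t -> forall eps, 0 < eps -> exists d, 0 < d /\
      forall y, 0 <= y <= t -> Rabs (y - s) < d -> Cnorm (Csub (D y) (D s)) < eps) ->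
  (forall s, derivable_pt_lim B s (b s)) ->
  (forall s, 0 <= s <= t -> Cnorm (Dd s) <= b s) ->
  Cnorm (D t) <= B t.
Proof.
  intros Ht D0 B0 Bt HD HC HB Hb.
  set (e1 := Cre (D t)). set (e2 := Cim (D t)). set (m := Cnorm (D t)).
  assert (Hm0 : 0 <= m) by apply Cnorm_ge0.
  set (h := fun s => e1 * Cre (D s) + e2 * Cim (D s) + - m * B s).
  destruct (mvt_within h (fun s => e1 * Cre (Dd s) + e2 * Cim (Dd s) + - m * b s) 0 t Ht)
    as [c [Hc Hmvt]].
  - intros x Hx. destruct (HD x Hx) as [H1 H2]. unfold h.
    repeat apply derivable_pt_lim_plus; apply (derivable_pt_lim_scal (fun s => _)); auto.
  - intros x Hx. unfold h.
    repeat apply cont_within_plus; apply (cont_within_scal 0 t _ (fun s => _)).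
    + exact (cont_within_coord 0 t D x true (HC x Hx)).
    + exact (cont_within_coord 0 t D x false (HC x Hx)).
    + exact (cont_within_of_derivable 0 t B x (b x) (HB x)).
  - assert (Hdc : e1 * Cre (Dd c) + e2 * Cim (Dd c) + - m * b c <= 0).
    { pose proof (cauchy_schwarz e1 e2 (Cre (Dd c)) (Cim (Dd c))) as HCS.
      fold (Cnorm (Dd c)) in HCS. unfold e1, e2 in HCS. fold (Cnorm (D t)) m in HCS.
      pose proof (Hb c Hc). assert (m * Cnorm (Dd c) <= m * b c) by (apply Rmult_le_compat_l; auto).
      unfold e1, e2. lra. }
    assert (Hh : h t <= h 0) by nra.
    unfold h in Hh. rewrite D0, B0 in Hh. cbn [Cre Cim C0] in Hh.
    assert (Em : e1 * Cre (D t) + e2 * Cim (D t) = m * m) by (unfold e1, e2, m; rewrite Cnorm_sq; ring).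
    rewrite Em in Hh.
    destruct Hm0 as [Hm|Hm].
    + apply Rmult_le_reg_l with m; auto. lra.
    + fold m. rewrite <- Hm. exact Bt.
Qed.

Lemma derivable_pt_lim_sub_affine f x l c k : derivable_pt_lim f x l ->
  derivable_pt_lim (fun s => f s + - c + - (s * k)) x (l - k).
Proof.
  intros H eps Heps. destruct (H eps Heps) as [del Hdel]. exists del. intros h Hh Hh'.
  replace ((f (x + h) + - c + - ((x + h) * k) - (f x + - c + - (x * k))) / h - (l - k))
    with ((f (x + h) - f x) / h - l) by (field; auto).
  apply Hdel; auto.
Qed.

(* [(e^(k t) - 1) / k], the primitive of [e^(k s)] on [[0, t]], written with
   absolute values as in the statement of the estimates. *)
Lemma exp_primitive_abs k t : k <> 0 -> 0 <= t ->
  (exp (k * t) - 1) / k = Rabs (1 - exp (k * t)) / Rabs k.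
Proof.
  intros Hk Ht. destruct (Rlt_dec 0 k) as [Hpos|Hneg].
  - assert (exp 0 <= exp (k * t)) by (apply exp_le; nra). rewrite exp_0 in *.
    rewrite Rabs_left1, Rabs_right by lra. field. lra.
  - assert (exp (k * t) <= exp 0) by (apply exp_le; nra). rewrite exp_0 in *.
    rewrite Rabs_right, Rabs_left by lra. field. lra.
Qed.

Module ExpPrimitive.
Import Coquelicot.Coquelicot.

Lemma derive_exp_primitive (A k x : R) : k <> 0 ->
  derivable_pt_lim (fun s => A * ((exp (k * s) - 1) / k)) x (A * exp (k * x)).
Proof. intro Hk. apply is_derive_Reals. auto_derive; auto. field. auto. Qed.

Lemma derive_linear (A x : R) : derivable_pt_lim (fun s => A * s) x A.
Proof. apply is_derive_Reals. auto_derive; auto. ring. Qed.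
End ExpPrimitive.

Definition euler_step (n : nat) : R := / INR (S n).

(* index of the grid interval containing [t >= 0] *)
Definition euler_index (n : nat) (t : R) : nat := (Z.to_nat (up (t * INR (S n))) - 1)%nat.

Lemma euler_step_pos n : 0 < euler_step n.
Proof. unfold euler_step. apply Rinv_0_lt_compat, lt_0_INR. lia. Qed.

Lemma euler_step_small e : 0 < e -> exists N, forall n, (N <= n)%nat -> euler_step n < e.
Proof.
  intro He. destruct (INR_archimed e 1 He) as [N HN].
  exists N. intros n Hn. unfold euler_step.
  assert (0 < INR (S n)) by (apply lt_0_INR; lia).
  assert (INR N <= INR (S n)) by (apply le_INR; lia).
  apply Rmult_lt_reg_l with (INR (S n)); auto. rewrite Rinv_r by lra. nra.
Qed.

Lemma up_le x y : x <= y -> (up x <= up y)%Z.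
Proof.
  intro H. destruct (archimed x) as [A1 A2]. destruct (archimed y) as [B1 B2].
  destruct (Z.le_gt_cases (up x) (up y)) as [h|h]; auto.
  assert (H0 : (up y <= up x - 1)%Z) by lia.
  apply IZR_le in H0. rewrite minus_IZR in H0. simpl in H0. lra.
Qed.

Lemma euler_index_spec n t : 0 <= t ->
  INR (euler_index n t) * euler_step n <= t < INR (euler_index n t) * euler_step n + euler_step n.
Proof.
  intro Ht. unfold euler_index, euler_step. set (x := t * INR (S n)).
  assert (HS : 0 < INR (S n)) by (apply lt_0_INR; lia).
  destruct (archimed x) as [A1 A2].
  assert (Hx : 0 <= x) by (unfold x; nra).
  assert (Hup : (1 <= up x)%Z) by (assert (0 < up x)%Z by (apply lt_IZR; lra); lia).
  rewrite minus_INR by lia. rewrite INR_IZR_INZ. replace (Z.of_nat (Z.to_nat (up x))) with (up x) by lia. change (INR 1) with 1.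
  unfold x in *. split.
  - apply Rmult_le_reg_r with (INR (S n)); auto.
    replace ((IZR (up (t * INR (S n))) - 1) * / INR (S n) * INR (S n))
      with (IZR (up (t * INR (S n))) - 1) by (field; lra). lra.
  - apply Rmult_lt_reg_r with (INR (S n)); auto.
    replace (((IZR (up (t * INR (S n))) - 1) * / INR (S n) + / INR (S n)) * INR (S n))
      with (IZR (up (t * INR (S n)))) by (field; lra). lra.
Qed.

Lemma euler_index_nonpos n t : t <= 0 -> euler_index n t = 0%nat.
Proof.
  intro Ht. unfold euler_index.
  assert (HS : 0 < INR (S n)) by (apply lt_0_INR; lia).
  destruct (archimed (t * INR (S n))) as [A1 A2].
  assert (up (t * INR (S n)) < 2)%Z by (apply lt_IZR; nra). lia.
Qed.

Lemma euler_index_mono n t s : t <= s -> (euler_index n t <= euler_index n s)%nat.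
Proof.
  intro H. unfold euler_index.
  assert (HS : 0 < INR (S n)) by (apply lt_0_INR; lia).
  pose proof (up_le (t * INR (S n)) (s * INR (S n)) ltac:(nra)). lia.
Qed.

Lemma euler_index_abs n t : INR (euler_index n t) * euler_step n <= Rabs t.
Proof.
  destruct (Rle_dec 0 t).
  - rewrite Rabs_right by lra. apply euler_index_spec; auto.
  - rewrite euler_index_nonpos by lra. simpl. rewrite Rmult_0_l. apply Rabs_pos.
Qed.

Lemma euler_index_gap n u v : 0 <= u <= v ->
  INR (euler_index n v - euler_index n u) * euler_step n <= v - u + euler_step n /\
  Rabs (INR (euler_index n v - euler_index n u) * euler_step n - (v - u)) <= euler_step n.
Proof.
  intro H. pose proof (euler_index_mono n u v (proj2 H)).
  rewrite minus_INR by auto.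
  destruct (euler_index_spec n u) as [U1 U2]; [lra|].
  destruct (euler_index_spec n v) as [V1 V2]; [lra|].
  split; [lra | apply Rabs_le; lra].
Qed.

Section EulerScheme.

Variable G : R -> Cx -> Cx.
Variable w0 : Cx.

Fixpoint euler_node (n k : nat) : Cx :=
  match k with
  | O => w0
  | S k' => Cadd (euler_node n k')
                 (Cscale (euler_step n) (G (INR k' * euler_step n) (euler_node n k')))
  end.

Definition euler_path (n : nat) (t : R) : Cx := euler_node n (euler_index n t).

Lemma euler_node_dev b n i d c eps :
  (forall k, (i <= k < i + d)%nat ->
     Rabs (coord b (G (INR k * euler_step n) (euler_node n k)) - c) <= eps) ->
  Rabs (coord b (euler_node n (i + d)) - coord b (euler_node n i) - INR d * euler_step n * c)
    <= INR d * euler_step n * eps.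
Proof.
  induction d as [|d IH]; intro H.
  - rewrite Nat.add_0_r. simpl INR.
    replace (coord b (euler_node n i) - coord b (euler_node n i) - 0 * euler_step n * c) with 0 by ring.
    rewrite Rabs_R0. lra.
  - rewrite Nat.add_succ_r. cbn [euler_node]. rewrite coord_add, coord_scale, S_INR.
    specialize (IH ltac:(intros k Hk; apply H; lia)).
    assert (Hk := H (i + d)%nat ltac:(lia)).
    pose proof (euler_step_pos n).
    set (gk := coord b (G (INR (i + d) * euler_step n) (euler_node n (i + d)))) in *.
    replace (coord b (euler_node n (i + d)) + euler_step n * gk - coord b (euler_node n i)
             - (INR d + 1) * euler_step n * c)
      with ((coord b (euler_node n (i + d)) - coord b (euler_node n i) - INR d * euler_step n * c)
            + euler_step n * (gk - c)) by ring.
    eapply Rle_trans; [apply Rabs_triang|].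
    rewrite Rabs_mult, (Rabs_right (euler_step n)) by lra. nra.
Qed.

Lemma euler_node_re_le n k : (forall t y, Cre (G t y) <= 0) -> Cre (euler_node n k) <= Cre w0.
Proof.
  intro H. induction k as [|k IH]; cbn [euler_node]; [lra|].
  cbn [Cadd Cscale Cre]. pose proof (euler_step_pos n).
  pose proof (H (INR k * euler_step n) (euler_node n k)). nra.
Qed.

Variable K : R.
Hypothesis K_ge0 : 0 <= K.
Hypothesis G_bounded : forall b t y, Rabs (coord b (G t y)) <= K.

Lemma euler_node_lip b n i d :
  Rabs (coord b (euler_node n (i + d)) - coord b (euler_node n i)) <= INR d * euler_step n * K.
Proof.
  pose proof (euler_node_dev b n i d 0 K) as H.
  rewrite Rmult_0_r, Rminus_0_r in H. apply H. intros k _. rewrite Rminus_0_r. apply G_bounded.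
Qed.

(* Uniform bound on the Euler paths at a given time: the compactness input. *)
Lemma euler_path_bounded b n t :
  Rabs (coord b (euler_path n t) - coord b w0) <= K * Rabs t.
Proof.
  pose proof (euler_node_lip b n 0 (euler_index n t)) as Y. simpl in Y.
  pose proof (euler_index_abs n t).
  apply Rle_trans with (INR (euler_index n t) * euler_step n * K); [exact Y|].
  rewrite Rmult_comm. apply Rmult_le_compat_l; auto.
Qed.

Lemma euler_path_lip b n t s : 0 <= t <= s ->
  Rabs (coord b (euler_path n s) - coord b (euler_path n t)) <= K * (s - t + euler_step n).
Proof.
  intro Hts. unfold euler_path. pose proof (euler_index_mono n t s (proj2 Hts)).
  pose proof (euler_node_lip b n (euler_index n t) (euler_index n s - euler_index n t)) as Y.
  replace (euler_index n t + (euler_index n s - euler_index n t))%nat with (euler_index n s) in Y by lia.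
  destruct (euler_index_gap n t s) as [L1 _]; [lra|].
  eapply Rle_trans; [apply Y|]. rewrite Rmult_comm. apply Rmult_le_compat_l; auto.
Qed.

Lemma euler_path_dev b n u v c eps : 0 <= u <= v -> 0 <= eps -> Rabs c <= K ->
  (forall k, (euler_index n u <= k < euler_index n v)%nat ->
     Rabs (coord b (G (INR k * euler_step n) (euler_node n k)) - c) <= eps) ->
  Rabs (coord b (euler_path n v) - coord b (euler_path n u) - (v - u) * c)
    <= (v - u + euler_step n) * eps + euler_step n * K.
Proof.
  intros Huv He Hc H. unfold euler_path.
  pose proof (euler_index_mono n u v (proj2 Huv)) as Hm.
  set (d := (euler_index n v - euler_index n u)%nat).
  assert (Ed : euler_index n v = (euler_index n u + d)%nat) by (unfold d; lia).
  pose proof (euler_node_dev b n (euler_index n u) d c eps) as D.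
  rewrite <- Ed in D. specialize (D ltac:(intros k Hk; apply H; lia)).
  destruct (euler_index_gap n u v Huv) as [L1 L2]. fold d in L1, L2.
  set (h := euler_step n) in *.
  replace (coord b (euler_node n (euler_index n v)) - coord b (euler_node n (euler_index n u)) - (v - u) * c)
    with ((coord b (euler_node n (euler_index n v)) - coord b (euler_node n (euler_index n u))
           - INR d * h * c) + (INR d * h - (v - u)) * c) by ring.
  eapply Rle_trans; [apply Rabs_triang|]. rewrite Rabs_mult.
  pose proof (Rabs_pos c). pose proof (Rabs_pos (INR d * h - (v - u))).
  pose proof (euler_step_pos n). pose proof (pos_INR d).
  assert (INR d * h * eps <= (v - u + h) * eps) by (apply Rmult_le_compat_r; auto).
  assert (Rabs (INR d * h - (v - u)) * Rabs c <= h * K) by (apply Rmult_le_compat; auto).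
  lra.
Qed.

Lemma euler_nodes_near b n u v k : 0 <= u <= v ->
  (euler_index n u <= k < euler_index n v)%nat ->
  Rabs (INR k * euler_step n - u) <= v - u + euler_step n /\
  Rabs (INR k * euler_step n - v) <= v - u + euler_step n /\
  Rabs (coord b (euler_node n k) - coord b (euler_path n u)) <= K * (v - u + euler_step n) /\
  Rabs (coord b (euler_node n k) - coord b (euler_path n v)) <= K * (v - u + euler_step n).
Proof.
  intros Huv Hk.
  destruct (euler_index_spec n u) as [U1 U2]; [lra|].
  destruct (euler_index_spec n v) as [V1 V2]; [lra|].
  destruct (euler_index_gap n u v Huv) as [L1 _].
  set (h := euler_step n) in *. pose proof (euler_step_pos n).
  assert (I1 : INR (euler_index n u) <= INR k) by (apply le_INR; lia).
  assert (I2 : INR k + 1 <= INR (euler_index n v)) by (rewrite <- S_INR; apply le_INR; lia).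
  assert (INR (euler_index n u) * h <= INR k * h) by (apply Rmult_le_compat_r; lra).
  assert (INR k * h + h <= INR (euler_index n v) * h) by nra.
  assert (M1 : INR (k - euler_index n u) * h <= v - u + h).
  { eapply Rle_trans; [|apply L1]. apply Rmult_le_compat_r; [lra|]. apply le_INR; lia. }
  assert (M2 : INR (euler_index n v - k) * h <= v - u + h).
  { eapply Rle_trans; [|apply L1]. apply Rmult_le_compat_r; [lra|]. apply le_INR; lia. }
  split; [apply Rabs_le; lra|]. split; [apply Rabs_le; lra|]. unfold euler_path. split.
  - pose proof (euler_node_lip b n (euler_index n u) (k - euler_index n u)) as Y.
    replace (euler_index n u + (k - euler_index n u))%nat with k in Y by lia.
    eapply Rle_trans; [apply Y|]. rewrite Rmult_comm. apply Rmult_le_compat_l; auto.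
  - pose proof (euler_node_lip b n k (euler_index n v - k)) as Y.
    replace (k + (euler_index n v - k))%nat with (euler_index n v) in Y by lia.
    rewrite Rabs_minus_sym. eapply Rle_trans; [apply Y|].
    rewrite Rmult_comm. apply Rmult_le_compat_l; auto.
Qed.

End EulerScheme.

(* Tychonoff's theorem, in the form needed for Peano's existence theorem: a
   sequence of functions [R * bool -> R] (curves in the plane) that is bounded
   pointwise by fixed bounds has a pointwise cluster value [f], which the
   sequence approaches at any four given arguments simultaneously, infinitely
   often. *)
Module PointwiseCompactness.
Import all_ssreflect_compat all_algebra.
Import mathcomp_extra boolp classical_sets functions set_interval reals topology normedtype.
Import Rstruct Rstruct_topology.
Import Order.TTheory GRing.Theory Num.Theory.
Import numFieldNormedType.Exports.
Local Open Scope classical_set_scope.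
Local Open Scope ring_scope.
Import ArrowAsProduct.

Lemma pointwise_cluster_point (phi : nat -> (R * bool)%type -> R) (lo hi : (R * bool)%type -> R) :
  (forall n i, Rle (lo i) (phi n i) /\ Rle (phi n i) (hi i)) ->
  exists f : (R * bool)%type -> R, forall i j k l (e : R) (N : nat), Rlt 0 e ->
    exists n, (N <= n)%coq_nat /\
      Rlt (Rabs (Rminus (phi n i) (f i))) e /\ Rlt (Rabs (Rminus (phi n j) (f j))) e /\
      Rlt (Rabs (Rminus (phi n k) (f k))) e /\ Rlt (Rabs (Rminus (phi n l) (f l))) e.
Proof.
move=> Hb.
have cpt := @tychonoff _ (fun=> R) (fun i => `[lo i, hi i]%classic)
  (fun i => @segment_compact R (lo i) (hi i)).
have [|f [_ cf]] := cpt (phi @ \oo) (fmap_proper_filter _ eventually_filter).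
  exists 0%N => // n _ i /=; rewrite in_itv /=; apply/andP; split; apply/RleP; apply Hb.
exists f => i j k l e N e0.
have Fa : (phi @ \oo) (phi @` [set n | (N <= n)%N]) by exists N => // n /= Nn; exists n.
have coord_ball m : nbhs f (proj m @^-1` ball (f m) e).
  by apply: (@proj_continuous _ (fun=> R) m f); apply: nbhsx_ballx; exact/RltP.
have nb : nbhs f ((proj i @^-1` ball (f i) e `&` proj j @^-1` ball (f j) e) `&`
                  (proj k @^-1` ball (f k) e `&` proj l @^-1` ball (f l) e)).
  by apply: filterI; apply: filterI.
have [g [[n Nn <-] [[bi bj] [bk bl]]]] := cf _ _ Fa nb.
exists n; split; first by apply/ssrnat.leP.
move: bi bj bk bl; rewrite /ball /= /proj /= => bi bj bk bl.
by split; [|split; [|split]]; rewrite Rabs_minus_sym; apply/RltP.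
Qed.
End PointwiseCompactness.

Definition field_cont_at (G : R -> Cx -> Cx) (t : R) (y : Cx) : Prop :=
  forall eps, 0 < eps -> exists d, 0 < d /\ forall s y', Rabs (s - t) < d ->
    (forall b, Rabs (coord b y' - coord b y) < d) ->
    forall b, Rabs (coord b (G s y') - coord b (G t y)) <= eps.

Section PeanoExistence.

Variable G : R -> Cx -> Cx.
Variable w0 : Cx.
Variable K : R.
Hypothesis K_ge0 : 0 <= K.
Hypothesis G_bounded : forall b t y, Rabs (coord b (G t y)) <= K.

Definition euler_cluster (w : R -> Cx) : Prop :=
  forall t s e N, 0 < e -> exists n, (N <= n)%nat /\ forall b,
    Rabs (coord b (euler_path G w0 n t) - coord b (w t)) < e /\
    Rabs (coord b (euler_path G w0 n s) - coord b (w s)) < e.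

(* A cluster curve exists, by Tychonoff: the Euler paths lie in the fixed box
   [|w(t) - w0| <= K |t|] coordinatewise. *)
Lemma euler_cluster_exists : exists w, euler_cluster w.
Proof.
  destruct (PointwiseCompactness.pointwise_cluster_point
     (fun n i => coord (snd i) (euler_path G w0 n (fst i)))
     (fun i => coord (snd i) w0 - K * Rabs (fst i))
     (fun i => coord (snd i) w0 + K * Rabs (fst i))) as [f Hf].
  { intros n [t b]. cbn [fst snd].
    pose proof (euler_path_bounded G w0 K K_ge0 G_bounded b n t) as H.
    apply Rabs_le_split in H. lra. }
  exists (fun t => mkC (f (t, true)) (f (t, false))). intros t s e N He.
  destruct (Hf (t, true) (t, false) (s, true) (s, false) e N He) as [n [Hn [A1 [A2 [A3 A4]]]]].
  exists n. split; auto. intros [|]; simpl in *; auto.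
Qed.

Lemma euler_path_dev_local n u v x y d1 eps :
  0 <= u <= v -> (x = u \/ x = v) -> v - u + euler_step n <= d1 / (2 * (K + 1)) -> 0 < d1 ->
  (forall b, Rabs (coord b (euler_path G w0 n x) - coord b y) < d1 / 4) ->
  (forall s y', Rabs (s - x) < d1 -> (forall b, Rabs (coord b y' - coord b y) < d1) ->
     forall b, Rabs (coord b (G s y') - coord b (G x y)) <= eps) -> 0 <= eps ->
  forall b, Rabs (coord b (euler_path G w0 n v) - coord b (euler_path G w0 n u) - (v - u) * coord b (G x y))
     <= (v - u + euler_step n) * eps + euler_step n * K.
Proof.
  intros Huv Hx Hsm Hd1 Hclose HP He b.
  assert (Hsmall : K * (d1 / (2 * (K + 1))) <= d1 / 2 /\ d1 / (2 * (K + 1)) < d1).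
  { split; apply Rmult_le_reg_r with (2 * (K + 1)) || apply Rmult_lt_reg_r with (2 * (K + 1)); try lra;
      field_simplify; nra. }
  apply (euler_path_dev G w0 K); auto.
  intros k Hk. apply HP.
  - destruct (euler_nodes_near G w0 K K_ge0 G_bounded true n u v k Huv Hk) as [A1 [A2 _]].
    destruct Hx; subst; lra.
  - intro b'. destruct (euler_nodes_near G w0 K K_ge0 G_bounded b' n u v k Huv Hk) as [_ [_ [A3 A4]]].
    specialize (Hclose b').
    assert (K * (v - u + euler_step n) <= d1 / 2).
    { apply Rle_trans with (K * (d1 / (2 * (K + 1)))); [apply Rmult_le_compat_l|]; lra. }
    replace (coord b' (euler_node G w0 n k) - coord b' y) with
      ((coord b' (euler_node G w0 n k) - coord b' (euler_path G w0 n x))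
       + (coord b' (euler_path G w0 n x) - coord b' y)) by ring.
    eapply Rle_lt_trans; [apply Rabs_triang|].
    destruct Hx; subst; lra.
Qed.

Variable w : R -> Cx.
Hypothesis w_cluster : euler_cluster w.

Lemma cluster_init : w 0 = w0.
Proof.
  assert (E : forall b, coord b (w 0) = coord b w0).
  { intro b. symmetry. apply eq_of_dist_lt_eps. intros e He.
    destruct (w_cluster 0 0 e 0%nat He) as [n [_ Hn]]. destruct (Hn b) as [H1 _].
    unfold euler_path in H1. rewrite euler_index_nonpos in H1 by lra. exact H1. }
  destruct (w 0) as [p q], w0 as [p0 q0].
  pose proof (E true); pose proof (E false); simpl in *. congruence.
Qed.

Lemma cluster_re_le : (forall t y, Cre (G t y) <= 0) -> forall t, Cre (w t) <= Cre w0.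
Proof.
  intros HRe t. apply (le_of_le_plus_eps _ _ 1); [lra|]. intros e He.
  destruct (w_cluster t t e 0%nat He) as [n [_ Hn]]. destruct (Hn true) as [H1 _]. simpl in H1.
  pose proof (euler_node_re_le G w0 n (euler_index n t) HRe).
  unfold euler_path in H1. apply Rabs_def2 in H1. lra.
Qed.

Lemma cluster_lip b s t : 0 <= t <= s -> Rabs (coord b (w s) - coord b (w t)) <= K * (s - t).
Proof.
  intro Hts. apply (le_of_le_plus_eps _ _ (2 + K)); [lra|]. intros e He.
  destruct (euler_step_small e He) as [N HN].
  destruct (w_cluster t s e N He) as [n [Hn Hb]]. destruct (Hb b) as [H1 H2].
  specialize (HN n Hn).
  pose proof (euler_path_lip G w0 K K_ge0 G_bounded b n t s Hts) as L.
  replace (coord b (w s) - coord b (w t)) with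
    ((coord b (euler_path G w0 n s) - coord b (euler_path G w0 n t))
     - (coord b (euler_path G w0 n s) - coord b (w s))
     + (coord b (euler_path G w0 n t) - coord b (w t))) by ring.
  eapply Rle_trans; [apply Rabs_triang3|].
  assert (K * euler_step n <= K * e) by (apply Rmult_le_compat_l; lra). nra.
Qed.

Lemma cluster_cont t : 0 <= t -> forall eps, 0 < eps -> exists d, 0 < d /\
  forall s, 0 <= s -> Rabs (s - t) < d -> Cnorm (Csub (w s) (w t)) < eps.
Proof.
  intros Ht eps Heps. exists (eps / (2 * K + 1)). split; [apply Rdiv_lt_0_compat; lra|].
  intros s Hs Hst.
  assert (Lip : forall b, Rabs (coord b (w s) - coord b (w t)) <= K * Rabs (s - t)).
  { intro b. destruct (Rle_dec t s).
    - rewrite (Rabs_right (s - t)) by lra. apply cluster_lip; lra.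
    - rewrite Rabs_minus_sym, (Rabs_left (s - t)) by lra.
      replace (- (s - t)) with (t - s) by ring. apply cluster_lip; lra. }
  eapply Rle_lt_trans; [apply (Cnorm_sub_le_coord _ _ _ Lip)|].
  assert (K * Rabs (s - t) <= K * (eps / (2 * K + 1))) by (apply Rmult_le_compat_l; lra).
  assert (2 * (K * (eps / (2 * K + 1))) < eps).
  { apply Rmult_lt_reg_r with (2 * K + 1); [lra|].
    replace (2 * (K * (eps / (2 * K + 1))) * (2 * K + 1)) with (2 * K * eps) by (field; lra). nra. }
  lra.
Qed.

Lemma cluster_increment t eps : 0 < t -> 0 < eps -> field_cont_at G t (w t) ->
  exists eta, 0 < eta /\ forall h b, Rabs h < Rmin t eta ->
    Rabs (coord b (w (t + h)) - coord b (w t) - h * coord b (G t (w t))) <= Rabs h * eps.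
Proof.
  intros Ht Heps HLC.
  destruct (HLC eps Heps) as [d1 [Hd1 HP]].
  set (eta := d1 / (4 * (K + 1))).
  assert (Heta : 0 < eta) by (unfold eta; apply Rdiv_lt_0_compat; lra).
  assert (E2eta : 2 * eta = d1 / (2 * (K + 1))) by (unfold eta; field; lra).
  exists eta. split; auto. intros h b Hh.
  pose proof (Rmin_l t eta). pose proof (Rmin_r t eta).
  destruct (Rabs_def2 h (Rmin t eta) Hh) as [Hh1 Hh2]. pose proof (Rabs_pos h).
  set (c := coord b (G t (w t))).
  assert (Hc : Rabs c <= K) by apply G_bounded.
  apply (le_of_le_plus_eps _ _ (eps + K + 2)); [lra|]. intros e He.
  destruct (euler_step_small (Rmin e eta)) as [N HN]; [apply Rmin_pos; lra|].
  destruct (w_cluster t (t + h) (Rmin e (d1 / 4)) N ltac:(apply Rmin_pos; lra)) as [n [Hn Hb]].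
  specialize (HN n Hn).
  pose proof (Rmin_l e eta). pose proof (Rmin_r e eta).
  pose proof (Rmin_l e (d1 / 4)). pose proof (Rmin_r e (d1 / 4)).
  assert (Hcl : forall b', Rabs (coord b' (euler_path G w0 n t) - coord b' (w t)) < d1 / 4).
  { intro b'. destruct (Hb b') as [Hb1 _]. lra. }
  assert (Hpath : Rabs (coord b (euler_path G w0 n (t + h)) - coord b (euler_path G w0 n t) - h * c)
                  <= (Rabs h + euler_step n) * eps + euler_step n * K).
  { destruct (Rle_dec 0 h).
    - rewrite (Rabs_right h) by lra.
      pose proof (euler_path_dev_local n t (t + h) t (w t) d1 eps ltac:(lra)
         (or_introl eq_refl) ltac:(lra) Hd1 Hcl HP ltac:(lra) b) as S.
      replace (t + h - t) with h in S by ring. exact S.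
    - rewrite (Rabs_left h) by lra.
      pose proof (euler_path_dev_local n (t + h) t t (w t) d1 eps ltac:(lra)
         (or_intror eq_refl) ltac:(lra) Hd1 Hcl HP ltac:(lra) b) as S.
      replace (coord b (euler_path G w0 n (t + h)) - coord b (euler_path G w0 n t) - h * c)
        with (- (coord b (euler_path G w0 n t) - coord b (euler_path G w0 n (t + h)) - (t - (t + h)) * c))
        by ring.
      rewrite Rabs_Ropp. replace (- h) with (t - (t + h)) by ring. exact S. }
  destruct (Hb b) as [Hb1 Hb2].
  replace (coord b (w (t + h)) - coord b (w t) - h * c) with
    ((coord b (euler_path G w0 n (t + h)) - coord b (euler_path G w0 n t) - h * c)
     - (coord b (euler_path G w0 n (t + h)) - coord b (w (t + h)))
     + (coord b (euler_path G w0 n t) - coord b (w t))) by ring.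
  eapply Rle_trans; [apply Rabs_triang3|].
  assert (euler_step n * eps <= e * eps) by (apply Rmult_le_compat_r; lra).
  assert (euler_step n * K <= e * K) by (apply Rmult_le_compat_r; lra).
  nra.
Qed.

Lemma cluster_deriv t : 0 < t -> field_cont_at G t (w t) ->
  forall b, derivable_pt_lim (fun s => coord b (w s)) t (coord b (G t (w t))).
Proof.
  intros Ht HLC b eps Heps.
  destruct (cluster_increment t (eps / 2) Ht ltac:(lra) HLC) as [eta [Heta Hinc]].
  assert (Hdel : 0 < Rmin t eta) by (apply Rmin_pos; lra).
  exists (mkposreal _ Hdel). intros h Hh0 Hh. simpl in Hh.
  assert (Habs : 0 < Rabs h) by (apply Rabs_pos_lt; auto).
  specialize (Hinc h b Hh).
  replace ((coord b (w (t + h)) - coord b (w t)) / h - coord b (G t (w t))) with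
    ((coord b (w (t + h)) - coord b (w t) - h * coord b (G t (w t))) / h) by (field; auto).
  unfold Rdiv. rewrite Rabs_mult, Rabs_inv.
  apply Rmult_lt_reg_r with (Rabs h); auto.
  rewrite Rmult_assoc, Rinv_l by lra. nra.
Qed.

End PeanoExistence.

Definition ray (z0 theta : Cx) (t : R) : Cx := Cadd z0 (Cscale t theta).

Lemma ray_re z0 theta t : Cre (ray z0 theta t) = Cre z0 + t * Cre theta.
Proof. reflexivity. Qed.

Definition drift (lam : Cx) (F : Cx -> Cx -> Cx) (z0 theta : Cx) (t : R) (y : Cx) : Cx :=
  Cmul (Cdiv theta lam) (Cadd Defs.C1 (F (Cexp (ray z0 theta t)) (Cexp y))).

Lemma Cnorm_div_unit lam theta : lam <> C0 -> Cnorm theta = 1 -> Cnorm (Cdiv theta lam) = / Cnorm lam.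
Proof. intros Hl Ht. rewrite Cnorm_div, Ht by auto. unfold Rdiv. ring. Qed.

Lemma exp_inU rho r z y : 0 < rho -> 0 < r -> inUt rho r z y -> inU rho r (Cexp z) (Cexp y).
Proof.
  intros Hrho Hr [H1 H2]. unfold inU. rewrite !Cnorm_exp.
  rewrite <- (exp_ln rho), <- (exp_ln r) by auto. split; apply exp_increasing; auto.
Qed.

Lemma beam_direction lam theta : lam <> C0 ->
  Cnorm (Cscale (- / Cnorm lam) lam) = 1 /\
  Cdiv theta lam = Cscale (- / Cnorm lam) (Cdiv theta (Cscale (- / Cnorm lam) lam)).
Proof.
  intro Hl. pose proof (Cnorm_pos lam Hl) as Hp. split.
  - rewrite Cnorm_scale, Rabs_Ropp, Rabs_inv. rewrite Rabs_right by lra. field. lra.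
  - pose proof (Cnorm_sq lam) as Hs.
    destruct lam as [p q], theta as [u v].
    unfold Cdiv, Cmul, Cinv, Cscale. cbn [Cre Cim] in *.
    set (n := Cnorm {| Cre := p; Cim := q |}) in *.
    assert (Hn : n <> 0) by lra.
    assert (E1 : (- / n * p) ^ 2 + (- / n * q) ^ 2 = 1).
    { replace ((- / n * p) ^ 2 + (- / n * q) ^ 2) with ((p ^ 2 + q ^ 2) / (n * n)) by (field; auto).
      rewrite <- Hs. field. auto. }
    rewrite E1, <- Hs. f_equal; field; auto.
Qed.

(* [cos] decreases on [[0, PI]] and is even. *)
Lemma cos_lt_of_abs_lt phi d : Rabs phi < d -> d <= PI -> cos d < cos phi.
Proof.
  intros H1 H2. replace (cos phi) with (cos (Rabs phi))
    by (unfold Rabs; destruct Rcase_abs; [rewrite cos_neg|]; reflexivity).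
  pose proof (Rabs_pos phi). apply cos_decreasing_1; lra.
Qed.

Lemma beam_re_neg lam theta q c delta : lam <> C0 -> Cnorm theta = 1 ->
  arg_lt (Cdiv theta (Cscale (- / Cnorm lam) lam)) delta ->
  0 <= c < 1 -> 0 < delta < acos c -> Cnorm q <= c ->
  Cre (Cmul (Cdiv theta lam) (Cadd Defs.C1 q)) < 0.
Proof.
  intros Hl Ht [Hu0 [phi0 [Hphi Hu]]] Hc Hd Hq.
  destruct (beam_direction lam theta Hl) as [Hv E]. rewrite E.
  set (vt := Cscale (- / Cnorm lam) lam) in *. set (u := Cdiv theta vt) in *.
  assert (Hvt : vt <> C0) by (intro P; rewrite P, Cnorm_C0 in Hv; lra).
  assert (Hnu : Cnorm u = 1) by (unfold u; rewrite Cnorm_div, Ht, Hv by auto; field).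
  rewrite Hnu in Hu.
  assert (Hre : Cre u = cos phi0) by (rewrite Hu; simpl; ring).
  pose proof (acos_bound c) as [_ Hac].
  assert (Hcd : c < cos delta) by (rewrite <- (cos_acos c) at 1 by lra; apply cos_decreasing_1; lra).
  assert (Hcp : cos delta < cos phi0) by (apply cos_lt_of_abs_lt; [apply Rabs_def1|]; lra).
  assert (Huq : Rabs (Cre (Cmul u q)) <= c).
  { eapply Rle_trans; [apply Rabs_Cre_le|]. rewrite Cnorm_mul, Hnu. lra. }
  apply Rabs_le_split in Huq.
  assert (Hlp : 0 < / Cnorm lam) by (apply Rinv_0_lt_compat, Cnorm_pos; auto).
  replace (Cre (Cmul (Cscale (- / Cnorm lam) u) (Cadd Defs.C1 q)))
    with (- / Cnorm lam * (Cre u + Cre (Cmul u q))) by (unfold Cmul, Cscale, Cadd, Defs.C1; simpl; ring).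
  rewrite Hre. nra.
Qed.

Section Foliation.

Variables (lam : Cx) (F : Cx -> Cx -> Cx) (rho r N : R) (a : nat).
Hypothesis lam_neq0 : lam <> C0.
Hypothesis a_ge1 : (1 <= a)%nat.
Hypothesis rho_pos : 0 < rho.
Hypothesis r_pos : 0 < r.
Hypothesis F_div : divisible_by_xa rho r a F.
Hypothesis F_norm : is_normR rho r a F N.

Lemma normR_nonneg : 0 <= N.
Proof.
  destruct F_norm as [Hub _].
  set (x0 := mkC (rho / 2) 0).
  apply Rle_trans with (Cnorm (Cdiv (F x0 C0) (Cpow x0 a))); [apply Cnorm_ge0|].
  apply Hub. exists x0, C0. split; [|split; [|reflexivity]].
  - unfold inU, x0, C0. rewrite !Cnorm_real, !Rabs_right by lra. lra.
  - unfold x0, C0. intro E. injection E. lra.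
Qed.

Lemma F_bound x y : inU rho r x y -> Cnorm (F x y) <= N * Cnorm x ^ a.
Proof.
  intro Hxy. destruct F_div as [G [_ HG]]. destruct F_norm as [Hub _].
  destruct (Req_dec (Cnorm x) 0) as [E|E].
  - apply Cnorm_eq0 in E. subst x. rewrite (HG _ _ Hxy), Cnorm_mul, Cnorm_pow, Cnorm_C0.
    rewrite pow_i by lia. lra.
  - assert (Hxa : 0 < Cnorm x ^ a) by (apply pow_lt; pose proof (Cnorm_ge0 x); lra).
    assert (Hp : Cpow x a <> C0) by (intro P; rewrite <- Cnorm_pow, P, Cnorm_C0 in Hxa; lra).
    assert (Hs : Cnorm (Cdiv (F x y) (Cpow x a)) <= N).
    { apply Hub. exists x, y. split; [exact Hxy|]. split; [|reflexivity].
      intro P. apply E. rewrite P. apply Cnorm_C0. }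
    rewrite Cnorm_div, Cnorm_pow in Hs by auto.
    apply Rmult_le_reg_r with (/ Cnorm x ^ a); [apply Rinv_0_lt_compat; auto|].
    rewrite Rmult_assoc, Rinv_r, Rmult_1_r by lra. exact Hs.
Qed.

Lemma F_bound_log z y : inUt rho r z y ->
  Cnorm (F (Cexp z) (Cexp y)) <= N * exp (INR a * Cre z) /\
  Cnorm (F (Cexp z) (Cexp y)) <= N * rho ^ a.
Proof.
  intro Hzy. pose proof (F_bound _ _ (exp_inU rho r z y rho_pos r_pos Hzy)) as B.
  rewrite Cnorm_exp in B. pose proof normR_nonneg.
  split.
  - rewrite exp_INR_mul. exact B.
  - eapply Rle_trans; [apply B|]. apply Rmult_le_compat_l; auto.
    apply pow_incr. split; [left; apply exp_pos|].
    destruct Hzy as [H1 _]. rewrite <- (exp_ln rho) by auto. left; apply exp_increasing; auto.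
Qed.

Lemma drift_re_neg delta z0 theta t y : N * rho ^ a < 1 -> 0 < delta < acos (N * rho ^ a) ->
  Cnorm theta = 1 -> arg_lt (Cdiv theta (Cscale (- / Cnorm lam) lam)) delta ->
  inUt rho r (ray z0 theta t) y -> Cre (drift lam F z0 theta t y) < 0.
Proof.
  intros HNr Hdel Ht Harg Hin.
  assert (0 <= N * rho ^ a) by (apply Rmult_le_pos; [apply normR_nonneg | apply pow_le; lra]).
  apply (beam_re_neg lam theta _ (N * rho ^ a) delta); auto.
  apply F_bound_log. exact Hin.
Qed.


(* The drift, cut off to [0] outside the lifted polydisc; the cut-off field is
   globally bounded, which is what the existence theorem needs. *)
Definition drift_cut (z0 theta : Cx) (t : R) (y : Cx) : Cx :=
  if Rlt_dec (Cre (ray z0 theta t)) (ln rho) then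
    if Rlt_dec (Cre y) (ln r) then drift lam F z0 theta t y else C0
  else C0.

Lemma drift_cut_eq z0 theta t y : inUt rho r (ray z0 theta t) y ->
  drift_cut z0 theta t y = drift lam F z0 theta t y.
Proof.
  intros [H1 H2]. unfold drift_cut.
  destruct (Rlt_dec _ _); [|contradiction]. destruct (Rlt_dec _ _); [reflexivity | contradiction].
Qed.

Lemma drift_cut_bounded z0 theta b t y : N * rho ^ a < 1 -> Cnorm theta = 1 ->
  Rabs (coord b (drift_cut z0 theta t y)) <= 2 / Cnorm lam.
Proof.
  intros HNr Ht. pose proof (Cnorm_pos lam lam_neq0) as Hlp.
  assert (HK0 : 0 <= 2 / Cnorm lam) by (unfold Rdiv; apply Rmult_le_pos; [lra | left; apply Rinv_0_lt_compat; lra]).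
  unfold drift_cut.
  destruct (Rlt_dec _ _) as [h1|h1]; [destruct (Rlt_dec _ _) as [h2|h2]|];
    try (eapply Rle_trans; [apply Rabs_coord_le | rewrite Cnorm_C0; exact HK0]).
  destruct (F_bound_log _ _ (conj h1 h2)) as [_ B2].
  eapply Rle_trans; [apply Rabs_coord_le|]. unfold drift.
  rewrite Cnorm_mul, Cnorm_div_unit by auto.
  pose proof (Cnorm_triang Defs.C1 (F (Cexp (ray z0 theta t)) (Cexp y))) as T3.
  rewrite Cnorm_C1 in T3. unfold Rdiv. rewrite Rmult_comm.
  apply Rmult_le_compat_r; [left; apply Rinv_0_lt_compat|]; lra.
Qed.

Lemma drift_cut_re_nonpos delta z0 theta t y : N * rho ^ a < 1 -> 0 < delta < acos (N * rho ^ a) ->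
  Cnorm theta = 1 -> arg_lt (Cdiv theta (Cscale (- / Cnorm lam) lam)) delta ->
  Cre (drift_cut z0 theta t y) <= 0.
Proof.
  intros HNr Hdel Ht Harg. unfold drift_cut.
  destruct (Rlt_dec _ _) as [h1|h1]; [destruct (Rlt_dec _ _) as [h2|h2]|];
    try (unfold C0; cbn [Cre]; lra).
  left. apply (drift_re_neg delta); auto. split; auto.
Qed.

Lemma coord_drift_diff b q u v :
  coord b (Cmul q (Cadd Defs.C1 u)) - coord b (Cmul q (Cadd Defs.C1 v)) = coord b (Cmul q (Csub u v)).
Proof. destruct b; unfold Csub, Cmul, Cadd, Copp, Defs.C1, coord; cbn [Cre Cim]; ring. Qed.

Lemma drift_cut_cont z0 theta t y : holo_on_U rho r F -> Cnorm theta = 1 ->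
  inUt rho r (ray z0 theta t) y -> field_cont_at (drift_cut z0 theta) t y.
Proof.
  intros Hholo Ht Hin eps Heps.
  pose proof (Cnorm_pos lam lam_neq0) as Hlp.
  destruct (Hholo _ _ (exp_inU rho r _ _ rho_pos r_pos Hin)) as [_ [_ Hc]].
  destruct (Hc (eps * Cnorm lam)) as [d' [Hd' Hd'']]; [nra|].
  destruct (Cexp_continuous (ray z0 theta t) d' Hd') as [dz [Hdz Hdz']].
  destruct (Cexp_continuous y d' Hd') as [dy [Hdy Hdy']].
  destruct Hin as [Hin1 Hin2].
  (* [d] also keeps [(ray s, y')] inside the lifted polydisc *)
  set (d := Rmin (Rmin dz dy) (Rmin (ln rho - Cre (ray z0 theta t)) (ln r - Cre y))).
  assert (Hd : 0 < d) by (unfold d; repeat apply Rmin_pos; lra).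
  assert (D1 : d <= dz /\ d <= dy /\ d <= ln rho - Cre (ray z0 theta t) /\ d <= ln r - Cre y).
  { unfold d. pose proof (Rmin_l (Rmin dz dy) (Rmin (ln rho - Cre (ray z0 theta t)) (ln r - Cre y))).
    pose proof (Rmin_r (Rmin dz dy) (Rmin (ln rho - Cre (ray z0 theta t)) (ln r - Cre y))).
    pose proof (Rmin_l dz dy). pose proof (Rmin_r dz dy).
    pose proof (Rmin_l (ln rho - Cre (ray z0 theta t)) (ln r - Cre y)).
    pose proof (Rmin_r (ln rho - Cre (ray z0 theta t)) (ln r - Cre y)). lra. }
  exists d. split; auto. intros s y' Hs Hy' b.
  assert (Zb : forall b', Rabs (coord b' (ray z0 theta s) - coord b' (ray z0 theta t)) < d).
  { intro b'. replace (coord b' (ray z0 theta s) - coord b' (ray z0 theta t)) with ((s - t) * coord b' theta)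
      by (destruct b'; unfold ray; cbn [coord Cadd Cscale Cre Cim]; ring).
    rewrite Rabs_mult. pose proof (Rabs_coord_le b' theta). rewrite Ht in *.
    pose proof (Rabs_pos (coord b' theta)). pose proof (Rabs_pos (s - t)). nra. }
  assert (Z1 := Zb true). assert (Z2 := Zb false). assert (Y1 := Hy' true). assert (Y2 := Hy' false).
  cbn [coord] in Z1, Z2, Y1, Y2. pose proof (Rabs_def2 _ _ Z1). pose proof (Rabs_def2 _ _ Y1).
  rewrite !drift_cut_eq by (split; lra). unfold drift. rewrite coord_drift_diff.
  eapply Rle_trans; [apply Rabs_coord_le|]. rewrite Cnorm_mul, Cnorm_div_unit by auto.
  assert (HF : Cnorm (Csub (F (Cexp (ray z0 theta s)) (Cexp y')) (F (Cexp (ray z0 theta t)) (Cexp y)))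
               < eps * Cnorm lam).
  { apply Hd''; [apply Hdz' | apply Hdy']; lra. }
  apply Rmult_le_reg_l with (Cnorm lam); auto.
  rewrite <- Rmult_assoc, Rinv_r by lra. lra.
Qed.


Lemma lift_re_decreasing delta z0 w0 theta w T :
  N * rho ^ a < 1 -> 0 < delta < acos (N * rho ^ a) ->
  Cnorm theta = 1 -> arg_lt (Cdiv theta (Cscale (- / Cnorm lam) lam)) delta ->
  lift_on lam F rho r z0 w0 theta w T ->
  forall s t, 0 <= s < t -> t <= T -> Cre (w t) < Cre (w s).
Proof.
  intros HNr Hdel Ht Harg [_ [_ [HU [HC HD]]]] s t Hst HtT.
  destruct (mvt_within (fun x => Cre (w x)) (fun x => Cre (drift lam F z0 theta x (w x))) s t)
    as [c [Hc E]]; [lra | | |].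
  - intros x Hx. apply (HD x). lra.
  - intros x Hx. apply (cont_within_coord s t w x true).
    intros eps Heps. destruct (HC x ltac:(lra) eps Heps) as [d [Hd0 Hd1]].
    exists d. split; auto. intros y Hy. apply Hd1. lra.
  - assert (Cre (drift lam F z0 theta c (w c)) < 0).
    { apply (drift_re_neg delta); auto. apply HU. lra. }
    nra.
Qed.

(* Existence of the lift of every ray of the beam, as long as it stays in
   [Re z < ln rho]: a solution of the cut-off equation given by Peano's
   theorem never leaves the lifted polydisc, since [Re w] decreases. *)
Lemma lift_exists delta z0 w0 theta : holo_on_U rho r F ->
  N * rho ^ a < 1 -> 0 < delta < acos (N * rho ^ a) ->
  Cnorm theta = 1 -> arg_lt (Cdiv theta (Cscale (- / Cnorm lam) lam)) delta ->
  inUt rho r z0 w0 ->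
  exists w : R -> Cx, forall T, 0 <= T -> Cre (Cadd z0 (Cscale T theta)) < ln rho ->
    lift_on lam F rho r z0 w0 theta w T.
Proof.
  intros Hholo HNr Hdel Ht Harg [Hz1 Hz2].
  set (G := drift_cut z0 theta). set (K := 2 / Cnorm lam).
  assert (K_ge0 : 0 <= K).
  { unfold K, Rdiv. apply Rmult_le_pos; [lra | left; apply Rinv_0_lt_compat, Cnorm_pos; auto]. }
  assert (G_bounded : forall b t y, Rabs (coord b (G t y)) <= K) by (intros; apply drift_cut_bounded; auto).
  destruct (euler_cluster_exists G w0 K K_ge0 G_bounded) as [w Hw].
  exists w. intros T HT HzT.
  assert (Hin : forall t, 0 <= t <= T -> inUt rho r (ray z0 theta t) (w t)).
  { intros t Htt. change (Cre (ray z0 theta T) < ln rho) in HzT. split.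
    - rewrite ray_re in *. destruct (Rle_dec 0 (Cre theta)).
      + assert (t * Cre theta <= T * Cre theta) by (apply Rmult_le_compat_r; lra). lra.
      + assert (0 <= t * - Cre theta) by (apply Rmult_le_pos; lra). lra.
    - pose proof (cluster_re_le G w0 w Hw
        (fun t y => drift_cut_re_nonpos delta z0 theta t y HNr Hdel Ht Harg) t). lra. }
  split; [exact HT|]. split; [exact (cluster_init G w0 w Hw)|]. split; [exact Hin|]. split.
  - intros t Htt eps Heps.
    destruct (cluster_cont G w0 K K_ge0 G_bounded w Hw t (proj1 Htt) eps Heps) as [d [Hd Hd']].
    exists d. split; auto. intros s Hs. apply Hd'. lra.
  - intros t Htt. assert (Hint := Hin t ltac:(lra)).
    pose proof (cluster_deriv G w0 K K_ge0 G_bounded w Hw t (proj1 Htt)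
                  (drift_cut_cont z0 theta t (w t) Hholo Ht Hint)) as Dv.
    unfold G in Dv. rewrite drift_cut_eq in Dv by exact Hint.
    split; [exact (Dv true) | exact (Dv false)].
Qed.


Definition lift_deviation (w0 theta : Cx) (w : R -> Cx) (s : R) : Cx :=
  Csub (Csub (w s) w0) (Cscale s (Cdiv theta lam)).

(* The deviation has derivative [theta / lam R(e^(ray s), e^(w s))], of size at
   most [A e^(k s)] with [A = ||R|| e^(a Re z0) / |lam|] and [k = a Re theta];
   hence it is dominated by any primitive of a majorant of [A e^(k s)]. *)
Lemma lift_deviation_le z0 w0 theta w T t (B b : R -> R) :
  Cnorm theta = 1 -> lift_on lam F rho r z0 w0 theta w T -> 0 <= t <= T ->
  B 0 = 0 -> 0 <= B t -> (forall s, derivable_pt_lim B s (b s)) ->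
  (forall s, 0 <= s <= t ->
     N * exp (INR a * Cre z0) / Cnorm lam * exp (INR a * Cre theta * s) <= b s) ->
  Cnorm (lift_deviation w0 theta w t) <= B t.
Proof.
  intros Ht [_ [Hw0 [HU [HC HD]]]] Htt B0 Bt HB Hb.
  pose proof (Cnorm_pos lam lam_neq0) as Hlp.
  set (ql := Cdiv theta lam).
  assert (Hql : Cnorm ql = / Cnorm lam) by (apply Cnorm_div_unit; auto).
  apply (mean_value_ineq _ (fun s => Cmul ql (F (Cexp (ray z0 theta s)) (Cexp (w s)))) B b t);
    auto; [lra | | | |].
  - unfold lift_deviation. rewrite Hw0. unfold Csub, Cadd, Copp, Cscale, C0; cbn [Cre Cim].
    f_equal; ring.
  - intros s Hs. destruct (HD s ltac:(lra)) as [H1 H2]. split.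
    + pose proof (derivable_pt_lim_sub_affine _ _ _ (Cre w0) (Cre ql) H1) as X.
      replace (Cre (Cmul ql (F (Cexp (ray z0 theta s)) (Cexp (w s))))) with
        (Cre (Cmul ql (Cadd Defs.C1 (F (Cexp (ray z0 theta s)) (Cexp (w s))))) - Cre ql)
        by (unfold Cmul, Cadd, Defs.C1; cbn [Cre Cim]; ring).
      exact X.
    + pose proof (derivable_pt_lim_sub_affine _ _ _ (Cim w0) (Cim ql) H2) as X.
      replace (Cim (Cmul ql (F (Cexp (ray z0 theta s)) (Cexp (w s))))) with
        (Cim (Cmul ql (Cadd Defs.C1 (F (Cexp (ray z0 theta s)) (Cexp (w s))))) - Cim ql)
        by (unfold Cmul, Cadd, Defs.C1; cbn [Cre Cim]; ring).
      exact X.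
  - intros s Hs eps Heps. destruct (HC s ltac:(lra) (eps / 2)) as [d [Hd0 Hd1]]; [lra|].
    set (M := Cnorm ql + 1). assert (HM : 0 < M) by (unfold M; pose proof (Cnorm_ge0 ql); lra).
    assert (HeM : 0 < eps / 2 / M) by (apply Rdiv_lt_0_compat; lra).
    exists (Rmin d (eps / 2 / M)). split; [apply Rmin_pos; auto|].
    intros y Hy Hys. pose proof (Rmin_l d (eps / 2 / M)). pose proof (Rmin_r d (eps / 2 / M)).
    replace (Csub (lift_deviation w0 theta w y) (lift_deviation w0 theta w s))
      with (Cadd (Csub (w y) (w s)) (Cscale (- (y - s)) ql))
      by (unfold lift_deviation; fold ql; unfold Csub, Cadd, Copp, Cscale; cbn [Cre Cim]; f_equal; ring).
    eapply Rle_lt_trans; [apply Cnorm_triang|]. rewrite Cnorm_scale, Rabs_Ropp.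
    assert (X1 := Hd1 y ltac:(lra) ltac:(lra)).
    assert (Rabs (y - s) * Cnorm ql <= eps / 2 / M * M)
      by (apply Rmult_le_compat; [apply Rabs_pos | apply Cnorm_ge0 | lra | unfold M; lra]).
    replace (eps / 2 / M * M) with (eps / 2) in * by (field; lra). lra.
  - intros s Hs. eapply Rle_trans; [|apply Hb; exact Hs].
    rewrite Cnorm_mul, Hql.
    destruct (F_bound_log (ray z0 theta s) (w s) (HU s ltac:(lra))) as [Bs _].
    rewrite ray_re in Bs.
    replace (INR a * (Cre z0 + s * Cre theta)) with (INR a * Cre z0 + INR a * Cre theta * s) in Bs by ring.
    rewrite exp_plus in Bs.
    replace (N * exp (INR a * Cre z0) / Cnorm lam * exp (INR a * Cre theta * s))
      with (/ Cnorm lam * (N * exp (INR a * Cre z0) * exp (INR a * Cre theta * s))) by (field; lra).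
    apply Rmult_le_compat_l; [left; apply Rinv_0_lt_compat; auto | lra].
Qed.

(* Estimate (ii) when [Re theta <> 0]: compare with [A (e^(k s) - 1) / k]. *)
Lemma lift_estimate_re_ne0 z0 w0 theta w T t :
  Cnorm theta = 1 -> lift_on lam F rho r z0 w0 theta w T -> 0 <= t <= T -> Cre theta <> 0 ->
  Cnorm (lift_deviation w0 theta w t)
    <= exp (INR a * Cre z0) / (Rabs (Cnorm lam * Cre theta) * INR a)
       * N * Rabs (1 - exp (INR a * t * Cre theta)).
Proof.
  intros Ht Hlift Htt Hre.
  pose proof (Cnorm_pos lam lam_neq0) as Hlp. pose proof normR_nonneg as HN0.
  assert (Ha : 1 <= INR a) by (change 1 with (INR 1); apply le_INR; auto).
  set (A := N * exp (INR a * Cre z0) / Cnorm lam).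
  assert (HA : 0 <= A).
  { unfold A, Rdiv. apply Rmult_le_pos; [apply Rmult_le_pos; [auto | left; apply exp_pos]|].
    left; apply Rinv_0_lt_compat; auto. }
  set (k := INR a * Cre theta).
  assert (Hk : k <> 0) by (unfold k; intro; apply Hre; nra).
  assert (Prim : (exp (k * t) - 1) / k = Rabs (1 - exp (k * t)) / Rabs k)
    by (apply exp_primitive_abs; lra).
  eapply Rle_trans.
  - apply (lift_deviation_le z0 w0 theta w T t
             (fun s => A * ((exp (k * s) - 1) / k)) (fun s => A * exp (k * s))); auto.
    + rewrite Rmult_0_r, exp_0. unfold Rdiv. ring.
    + rewrite Prim. apply Rmult_le_pos; [auto|]. unfold Rdiv.
      apply Rmult_le_pos; [apply Rabs_pos | left; apply Rinv_0_lt_compat, Rabs_pos_lt; auto].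
    + intro s. apply ExpPrimitive.derive_exp_primitive; auto.
    + intros s _. apply Rle_refl.
  - right. rewrite Prim. replace (INR a * t * Cre theta) with (k * t) by (unfold k; ring).
    unfold A, k. rewrite !Rabs_mult, (Rabs_right (Cnorm lam)), (Rabs_right (INR a)) by lra.
    field. split; [lra|]. split; [apply Rabs_no_R0; auto | lra].
Qed.

(* Estimate (ii) when [Re theta = 0]: compare with [A s]. *)
Lemma lift_estimate_re_eq0 z0 w0 theta w T t :
  Cnorm theta = 1 -> lift_on lam F rho r z0 w0 theta w T -> 0 <= t <= T -> Cre theta = 0 ->
  Cnorm (lift_deviation w0 theta w t) <= exp (INR a * Cre z0) / Cnorm lam * t * N.
Proof.
  intros Ht Hlift Htt Hre.
  pose proof (Cnorm_pos lam lam_neq0) as Hlp. pose proof normR_nonneg as HN0.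
  set (A := N * exp (INR a * Cre z0) / Cnorm lam).
  assert (HA : 0 <= A).
  { unfold A, Rdiv. apply Rmult_le_pos; [apply Rmult_le_pos; [auto | left; apply exp_pos]|].
    left; apply Rinv_0_lt_compat; auto. }
  eapply Rle_trans.
  - apply (lift_deviation_le z0 w0 theta w T t (fun s => A * s) (fun _ => A)); auto.
    + ring.
    + apply Rmult_le_pos; lra.
    + intro s. apply ExpPrimitive.derive_linear.
    + intros s _. rewrite Hre, Rmult_0_r, Rmult_0_l, exp_0, Rmult_1_r. apply Rle_refl.
  - right. unfold A. field. lra.
Qed.

End Foliation.

Theorem mainTheorem10
  (lam : Cx) (a : nat) (F : Cx -> Cx -> Cx) (rho r N : R)
  (Hlam : lam <> C0) (Ha : (1 <= a)%nat)
  (Hrho : 0 < rho) (Hr : 0 < r)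
  (Hholo : holo_on_U rho r F)
  (Hdiv : divisible_by_xa rho r a F)
  (Hsup : exists M, M < 1 /\ forall x y, inU rho r x y -> Cnorm (F x y) <= M)
  (HN : is_normR rho r a F N)
  (HNrho : N * rho ^ a < 1)
  (delta : R) (Hdelta : 0 < delta < acos (N * rho ^ a)) :
  let vt := Cscale (- / Cnorm lam) lam in
  (* (i) *)
  (forall z0 w0, inUt rho r z0 w0 ->
     is_stability_beam lam F rho r (z0, w0) z0 vt delta) /\
  (* (ii) *)
  (forall z0 w0 theta (w : R -> Cx) T,
     Cnorm theta = 1 ->
     lift_on lam F rho r z0 w0 theta w T ->
     forall t, 0 <= t <= T ->
       let err := Cnorm (Csub (Csub (w t) w0) (Cscale t (Cdiv theta lam))) in
       (Cre theta <> 0 ->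
          err <= exp (INR a * Cre z0) / (Rabs (Cnorm lam * Cre theta) * INR a)
                 * N * Rabs (1 - exp (INR a * t * Cre theta))) /\
       (Cre theta = 0 ->
          err <= exp (INR a * Cre z0) / Cnorm lam * t * N)).
Proof.
  intro vt. split.
  -
    intros z0 w0 Hz. split; [reflexivity|]. intros theta Ht Harg. split.
    + exact (lift_exists lam F rho r N a Hlam Ha Hrho Hr Hdiv HN
               delta z0 w0 theta Hholo HNrho Hdelta Ht Harg Hz).
    + intros w T Hlift.
      exact (lift_re_decreasing lam F rho r N a Hlam Ha Hrho Hr Hdiv HN
               delta z0 w0 theta w T HNrho Hdelta Ht Harg Hlift).
  -
    intros z0 w0 theta w T Ht Hlift t Htt err. split; intro Hre.
    + exact (lift_estimate_re_ne0 lam F rho r N a Hlam Ha Hrho Hr Hdiv HN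
               z0 w0 theta w T t Ht Hlift Htt Hre).
    + exact (lift_estimate_re_eq0 lam F rho r N a Hlam Ha Hrho Hr Hdiv HN
               z0 w0 theta w T t Ht Hlift Htt Hre).
Qed.
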